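(* Let $\mathfrak g=\mathfrak k\oplus\mathfrak m$ be a Pauli-spanned Cartan decomposition of a Lie algebra $\mathfrak g\subseteq\mathfrak{su}(2^n)$, and let $\mathfrak b=\mathrm{span}_{i\mathbb R}\{\tilde b_1,\dots,\tilde b_d\}\subseteq\mathfrak m$ be an Abelian subalgebra spanned by $i$ times pairwise commuting Pauli strings $\tilde b_1,\dots,\tilde b_d\in\tilde{\mathfrak m}$, all belonging to the same connected component of the frustration graph of $\mathfrak g$. Then the $\tilde b_j$ can be ordered so that $$|\tilde{\mathfrak k}^1(\mathfrak b)|>|\tilde{\mathfrak k}^2_1(\mathfrak b)|\ge|\tilde{\mathfrak k}^3_{12}(\mathfrak b)|\ge\cdots\ge|\tilde{\mathfrak k}^d_{1\dots d-1}(\mathfrak b)|,$$ where equality occurs only between empty sets (so the non-empty sets form a strictly decreasing initial segment and all empty sets come at the end). Moreover, if the first $r$ sets are non-empty, the same inequalities hold for any permutation of the first $r$ indices; a general permutation of the indices may cause empty sets to appear earlier in the sequence but does not change the sizes or order of the non-empty sets.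
   Context: Pauli strings on $n$ qubits are tensor products of $I,X,Y,Z$, not all identity; two Pauli strings either commute or anticommute. A Pauli-spanned Cartan decomposition is $\mathfrak g=\mathfrak k\oplus\mathfrak m$ with $\mathfrak k=\mathrm{span}_{i\mathbb R}\tilde{\mathfrak k}$, $\mathfrak m=\mathrm{span}_{i\mathbb R}\tilde{\mathfrak m}$, $\mathfrak g=\mathrm{span}_{i\mathbb R}\tilde{\mathfrak g}$, $\tilde{\mathfrak g}=\tilde{\mathfrak k}\sqcup\tilde{\mathfrak m}$ sets of Pauli strings, and $[\mathfrak k,\mathfrak k]\subseteq\mathfrak k$, $[\mathfrak m,\mathfrak m]\subseteq\mathfrak k$, $[\mathfrak k,\mathfrak m]\subseteq\mathfrak m$. The frustration graph of $\mathfrak g$ has vertex set $\tilde{\mathfrak g}$ and an edge between $\sigma,\tau$ iff $[\sigma,\tau]\ne0$. For disjoint index lists, $\tilde{\mathfrak k}^{i_1i_2\dots}_{j_1j_2\dots}(\mathfrak b)$ is the set of $\tilde k\in\tilde{\mathfrak k}$ that anticommute with every $\tilde b_{i_p}$ and commute with every $\tilde b_{j_q}$ (no condition for other indices); $\tilde{\mathfrak k}^r_{1\dots r-1}$ thus consists of elements commuting with $\tilde b_1,\dots,\tilde b_{r-1}$ and anticommuting with $\tilde b_r$. *)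

From HB Require Import structures.
From mathcomp Require Import all_boot fingroup perm.
Set Implicit Arguments. Unset Strict Implicit. Unset Printing Implicit Defensive.

(* Pauli strings on n qubits, up to phase, in the binary (x|z) encoding:
   at each qubit (false,false) = I, (true,false) = X, (true,true) = Y,
   (false,true) = Z. *)
Definition pstr (n : nat) := {ffun 'I_n -> bool * bool}.

Definition pid (n : nat) : pstr n := [ffun => (false, false)].

Definition anticomm1 (a b : bool * bool) : bool :=
  [&& a != (false, false), b != (false, false) & a != b].

Definition anticomm n (p q : pstr n) : bool :=
  odd #|[set i | anticomm1 (p i) (q i)]|.

Definition commute_ps n (p q : pstr n) : bool := ~~ anticomm p q.

(* product of Pauli strings up to a phase (so [p,q] is proportional to pmul p q
   when p and q anticommute, and vanishes otherwise) *)
Definition pmul n (p q : pstr n) : pstr n :=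
  [ffun i => ((p i).1 (+) (q i).1, (p i).2 (+) (q i).2)].

(* g = k (+) m Pauli-spanned Cartan decomposition, given by the Pauli sets
   K = k~ and M = m~ (disjoint, not containing the identity).  Since distinct
   Pauli strings are linearly independent and [s,t] = 2 s t (or 0), the
   inclusions [k,k]<=k, [m,m]<=k, [k,m]<=m unfold to the following. *)
Definition pauli_cartan n (K M : {set pstr n}) : Prop :=
  [/\ [disjoint K & M], pid n \notin K & pid n \notin M] /\
  [/\ {in K &, forall p q, anticomm p q -> pmul p q \in K},
       {in M &, forall p q, anticomm p q -> pmul p q \in K} &
       {in K & M, forall p q, anticomm p q -> pmul p q \in M}].

Definition frustration n (K M : {set pstr n}) : rel (pstr n) :=
  fun p q => [&& p \in K :|: M, q \in K :|: M & anticomm p q].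

(* k~^r_{1..r-1}(b): elements of K anticommuting with b r and commuting with
   b i for all i < r (indices 0-based) *)
Definition kset n d (K : {set pstr n}) (b : 'I_d -> pstr n) (r : 'I_d)
  : {set pstr n} :=
  [set k in K | anticomm k (b r) &&
                [forall i : 'I_d, (i < r) ==> commute_ps k (b i)]].

Definition ksizes n d (K : {set pstr n}) (b : 'I_d -> pstr n) : seq nat :=
  [seq #|kset K b r| | r <- enum 'I_d].

Definition chain_ok (a : seq nat) : Prop :=
  (1 < size a -> nth 0 a 1 < nth 0 a 0) /\
  forall i, i.+1 < size a ->
    nth 0 a i.+1 <= nth 0 a i /\ (nth 0 a i.+1 = nth 0 a i -> nth 0 a i = 0).

From mathcomp Require Import all_boot fingroup perm.
Set Implicit Arguments. Unset Strict Implicit. Unset Printing Implicit Defensive.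

(* Write K_J for the elements of k~ commuting with every b_l, l in J, and A_i for the
   strings anticommuting with b_i, so that the sizes in question are |K_J :&: A_i| with
   J the indices placed before i.  The core fact is that for every J the non-empty sets
   K_J :&: A_i pairwise intersect and all have the same size.  Intersection: a path in
   the frustration graph yields a string of g anticommuting with b_i and b_j, and an
   induction on J, using only that g is closed under products of anticommuting strings,
   moves it into the commutant of the b_l (and then into k, multiplying by b_i).  Equal
   size: for a common element k, conjugating by the Clifford rotations of k and of
   k b_i b_j preserves k~ and commutation, fixes each b_l with l in J and sends b_i to
   b_j.  Hence placing an index with non-empty set strictly shrinks every later non-empty
   set (the common element drops out), placing one with empty set changes nothing, and
   swapping two neighbours keeps the non-zero sizes (inclusion-exclusion).  A greedy
   order puts all zeros last, and the non-zero sizes are independent of the order. *)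

Definition dec_or_zero (m m' : nat) := (m' < m) || (m == 0) && (m' == 0).

Lemma sorted_chain_ok (s : seq nat) :
  sorted dec_or_zero s -> (1 < size s -> 0 < nth 0 s 0) -> chain_ok s.
Proof.
move=> /(sortedP 0) s_sorted s0_pos; split=> [s1|i si].
  by case/orP: (s_sorted 0 s1) => // /andP[/eqP s0]; move: (s0_pos s1); rewrite s0.
case/orP: (s_sorted i si) => [lt_i|/andP[/eqP-> /eqP->]] //.
by split=> [|eq_i]; [exact: ltnW | rewrite eq_i ltnn in lt_i].
Qed.

Lemma mem_take_enum d r (i : 'I_d) : (i \in take r (enum 'I_d)) = (i < r).
Proof.
rewrite -(mem_map val_inj) map_take val_enum_ord take_iota mem_iota /= add0n.
by rewrite leq_min ltn_ord andbT.
Qed.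

Lemma mem_drop_enum d r (i : 'I_d) : (i \in drop r (enum 'I_d)) = (r <= i).
Proof.
rewrite -(mem_map val_inj) map_drop val_enum_ord drop_iota mem_iota /= add0n.
case: (leqP r i) => //= ri; rewrite subnKC ?ltn_ord //.
exact: leq_trans ri (ltnW (ltn_ord i)).
Qed.

Lemma forall_lt_all d (P : pred 'I_d) (r : nat) :
  [forall i : 'I_d, (i < r) ==> P i] = all P (take r (enum 'I_d)).
Proof.
apply/forallP/allP => h i; first by rewrite mem_take_enum => ir; exact: (implyP (h i)).
by apply/implyP; rewrite -mem_take_enum; apply: h.
Qed.

Lemma perm_map_enum (T : finType) (f : {perm T}) : perm_eq (map f (enum T)) (enum T).
Proof.
apply: uniq_perm; rewrite ?(map_inj_uniq perm_inj) ?enum_uniq // => x.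
by rewrite mem_enum; apply/mapP; exists ((f^-1)%g x); rewrite ?mem_enum ?permKV.
Qed.

Lemma perm_enum_ordP d L : perm_eq L (enum 'I_d) -> exists s : 'S_d, L = map s (enum 'I_d).
Proof.
rewrite -val_ord_tuple => /tuple_permP[s ->]; exists s.
by apply: eq_map => i; rewrite tnth_ord_tuple.
Qed.

Lemma map_perm_enum_prefix d (p : 'S_d) r : (forall i : 'I_d, r <= i -> p i = i) ->
  exists2 X, perm_eq X (take r (enum 'I_d)) & map p (enum 'I_d) = X ++ drop r (enum 'I_d).
Proof.
move=> fix_p; have drop_p : drop r (map p (enum 'I_d)) = drop r (enum 'I_d).
  by rewrite -map_drop; apply: map_id_in => i; rewrite mem_drop_enum; exact: fix_p.
exists (take r (map p (enum 'I_d))); last by rewrite -drop_p cat_take_drop.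
by rewrite -(perm_cat2r (drop r (enum 'I_d))) -{1}drop_p !cat_take_drop perm_map_enum.
Qed.

(* In the application X0 is k~ and A i the strings anticommuting with b_i, so that
   rest J is K_J. *)
Section Peeling.
Variables (U I : finType) (X0 : {set U}) (A : I -> {set U}).
Implicit Types (J : {set I}) (i j : I) (L R X Y Z : seq I).

Definition rest J := X0 :\: \bigcup_(i in J) A i.

Definition level J i := #|rest J :&: A i|.

Fixpoint levels J L : seq nat :=
  if L is i :: L' then level J i :: levels (i |: J) L' else [::].

Lemma rest0 : rest set0 = X0.
Proof. by rewrite /rest big_set0 setD0. Qed.

Lemma rest_setU1 J i : rest (i |: J) = rest J :\: A i.
Proof. by rewrite /rest bigcup_setU big_set1 setDDl setUC. Qed.

Lemma card_rest_setI_le J i j : #|rest J :&: A i :&: A j| <= level J i.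
Proof. exact/subset_leq_card/subsetIl. Qed.

Lemma level_setU1 J i j : level (i |: J) j = level J j - #|rest J :&: A i :&: A j|.
Proof.
rewrite /level rest_setU1 setIDAC -(cardsID (A i) (rest J :&: A j)).
by rewrite [rest J :&: A j :&: A i]setIAC addKn.
Qed.

Lemma level_setU1_le J i j : level (i |: J) j <= level J j.
Proof. by rewrite level_setU1 leq_subr. Qed.

Lemma size_levels J L : size (levels J L) = size L.
Proof. by elim: L J => //= i L IH J; rewrite IH. Qed.

Lemma levels_cat J X Z :
  levels J (X ++ Z) = levels J X ++ levels (J :|: [set x in X]) Z.
Proof.
elim: X J => [|i X IH] J /=.
  by rewrite (_ : J :|: _ = J) //; apply/setP => x; rewrite !inE orbF.
rewrite IH (_ : i |: J :|: _ = J :|: [set x in i :: X]) //.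
by apply/setP => x; rewrite !inE orbCA orbA.
Qed.

Lemma nth_levels J L r i0 : r < size L ->
  nth 0 (levels J L) r = level (J :|: [set x in take r L]) (nth i0 L r).
Proof.
move=> rL; rewrite -{1}(cat_take_drop r L) levels_cat nth_cat size_levels.
by rewrite size_takel ?ltnn ?subnn; [rewrite (drop_nth i0) | exact: ltnW].
Qed.

Lemma levels_zeros J L : {in L, forall j, level J j = 0} -> levels J L = nseq (size L) 0.
Proof.
elim: L J => //= i L IH J L0; rewrite L0 ?mem_head // IH // => j jL.
by apply/eqP; rewrite -leqn0 -(L0 j) ?level_setU1_le // inE jL orbT.
Qed.

Hypothesis level_common : forall J i j, 0 < level J i -> 0 < level J j ->
  exists2 x, x \in rest J :&: A i & x \in A j.
Hypothesis level_eq : forall J i j, 0 < level J i -> 0 < level J j ->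
  level J i = level J j.

Lemma level_setU1_lt J i j :
  0 < level J i -> 0 < level (i |: J) j -> level (i |: J) j < level J i.
Proof.
move=> i_pos ij_pos; have j_pos := leq_trans ij_pos (level_setU1_le J i j).
have [x xj xi] := level_common j_pos i_pos.
rewrite level_setU1 (level_eq i_pos j_pos) ltn_subrL j_pos andbT card_gt0.
by apply/set0Pn; exists x; rewrite setIAC inE xj xi.
Qed.

Lemma levels_swap J i j L :
  [seq m <- levels J [:: i, j & L] | m != 0] = [seq m <- levels J [:: j, i & L] | m != 0].
Proof.
rewrite /= setUCA !level_setU1 [rest J :&: A j :&: A i]setIAC.
have := card_rest_setI_le J i j; have := card_rest_setI_le J j i.
rewrite setIAC; set c := #|_|.
case: (posnP (level J i)) => [-> | i_pos].
  by rewrite leqn0 => _ /eqP->; rewrite !subn0.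
case: (posnP (level J j)) => [-> | j_pos].
  by rewrite leqn0 => /eqP-> _; rewrite !subn0 -[level J i != 0]lt0n i_pos.
by rewrite (level_eq i_pos j_pos).
Qed.

Lemma levels_cons_nz J i L L' :
  [seq m <- levels (i |: J) L | m != 0] = [seq m <- levels (i |: J) L' | m != 0] ->
  [seq m <- levels J (i :: L) | m != 0] = [seq m <- levels J (i :: L') | m != 0].
Proof. by rewrite /= => ->. Qed.

Lemma levels_move_front J x X Y :
  [seq m <- levels J (X ++ x :: Y) | m != 0] = [seq m <- levels J (x :: X ++ Y) | m != 0].
Proof.
by elim: X J => // y X IH J; rewrite cat_cons (levels_cons_nz (IH (y |: J))) levels_swap.
Qed.

Lemma levels_perm J L L' : perm_eq L L' ->
  [seq m <- levels J L | m != 0] = [seq m <- levels J L' | m != 0].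
Proof.
elim: L J L' => [|x L IH] J L'; first by move/perm_size; case: L'.
move=> LL'; have xL' : x \in L' by rewrite -(perm_mem LL') mem_head.
move: LL'; case/splitPr: xL' => X Y LL'; rewrite levels_move_front; apply/levels_cons_nz/IH.
by rewrite -(perm_cons x) (perm_trans LL') // -cat1s perm_catCA.
Qed.

Lemma exists_sorted_levels J R :
  exists2 L, perm_eq L R & sorted dec_or_zero (levels J L).
Proof.
have [m] := ubnP (size R); elim: m R J => // m IH R J sizeR.
have [/hasP[i iR i_pos] | /hasPn no_pos] := boolP (has (fun i => 0 < level J i) R).
  have [|L LR L_sorted] := IH (rem i R) (i |: J).
    by rewrite size_rem // -ltnS prednK //; case: (R) iR.
  exists (i :: L); first by rewrite perm_sym (perm_trans (perm_to_rem iR)) // perm_cons perm_sym.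
  case: L {LR} L_sorted => //= j L ->; rewrite andbT /dec_or_zero.
  case: (posnP (level (i |: J) j)) => [->|ij_pos]; first by rewrite i_pos.
  by rewrite level_setU1_lt.
exists R => //; rewrite levels_zeros => [|j /no_pos]; last by rewrite lt0n negbK => /eqP.
by elim: (size R) => //= k; case: k.
Qed.

Lemma levels_perm_prefix J X Y Z : perm_eq X Y -> all (fun m => m != 0) (levels J Y) ->
  levels J (X ++ Z) = levels J (Y ++ Z).
Proof.
move=> XY /all_filterP Y_nz; have XY_nz := levels_perm J XY; rewrite Y_nz in XY_nz.
rewrite !levels_cat (_ : [set x in X] = [set x in Y]); last first.
  by apply/setP => x; rewrite !inE (perm_mem XY).
congr (_ ++ _); rewrite -XY_nz; apply/esym/all_filterP.
by rewrite all_count -size_filter XY_nz !size_levels (perm_size XY).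
Qed.

End Peeling.

Lemma odd_card_addb (T : finType) (f g : pred T) :
  odd #|[pred x | f x (+) g x]| = odd #|f| (+) odd #|g|.
Proof.
rewrite !cardE /enum_mem !size_filter.
by elim: (Finite.enum T) => //= x s IH; rewrite !oddD IH !unfold_in /= !oddb addbACA.
Qed.

Section PauliAlgebra.
Variable n : nat.
Implicit Types p q r : pstr n.

Lemma anticomm1E (a c : bool * bool) : anticomm1 a c = (a.1 && c.2) (+) (a.2 && c.1).
Proof. by case: a => [[] []]; case: c => [[] []]. Qed.

Lemma anticommC p q : anticomm p q = anticomm q p.
Proof.
congr (odd _); apply: eq_card => i; rewrite !inE !anticomm1E.
by case: (p i) => [[] []]; case: (q i) => [[] []].
Qed.

Lemma anticommxx p : anticomm p p = false.
Proof.
rewrite /anticomm (eq_card (B := pred0)) ?card0 // => i.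
by rewrite !inE anticomm1E; case: (p i) => [[] []].
Qed.

Lemma anticommMl p q r : anticomm (pmul p q) r = anticomm p r (+) anticomm q r.
Proof.
rewrite /anticomm !cardsE -odd_card_addb; congr (odd _); apply: eq_card => i.
rewrite !unfold_in /= ffunE /=.
by case: (p i) => [[] []]; case: (q i) => [[] []]; case: (r i) => [[] []].
Qed.

Lemma anticommMr p q r : anticomm r (pmul p q) = anticomm r p (+) anticomm r q.
Proof. by rewrite anticommC anticommMl !(anticommC r). Qed.

Lemma pmulC p q : pmul p q = pmul q p.
Proof. by apply/ffunP => i; rewrite !ffunE addbC [X in (_, X)]addbC. Qed.

Lemma pmulKl p q : pmul p (pmul p q) = q.
Proof. by apply/ffunP => i; rewrite !ffunE /= !addbA !addbb; case: (q i). Qed.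

Lemma pmulA p q r : pmul p (pmul q r) = pmul (pmul p q) r.
Proof. by apply/ffunP => i; rewrite !ffunE /= !addbA. Qed.

Lemma pmulKK p q r : pmul (pmul p q) (pmul p r) = pmul q r.
Proof.
apply/ffunP => i; rewrite !ffunE /=.
by case: (p i) => [[] []]; case: (q i) => [[] []]; case: (r i) => [[] []].
Qed.

End PauliAlgebra.

Section ClosedSets.
Variable n : nat.
Implicit Types (S : {set pstr n}) (T : seq (pstr n)) (p q t u v w x : pstr n).

Definition pmul_closed S := {in S &, forall p q, anticomm p q -> pmul p q \in S}.

Definition commutant S T := [set p in S | all (commute_ps p) T].

Lemma commutant_nil S : commutant S [::] = S.
Proof. by apply/setP => p; rewrite inE andbT. Qed.

Lemma commutant_cons S w T : commutant S (w :: T) = commutant (commutant S T) [:: w].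
Proof. by apply/setP => p; rewrite !inE /= andbT -andbA [commute_ps _ _ && _]andbC. Qed.

Lemma commutant_sub S T : commutant S T \subset S.
Proof. by apply/subsetP => p; rewrite inE => /andP[]. Qed.

Lemma commutant_closed S T : pmul_closed S -> pmul_closed (commutant S T).
Proof.
move=> clS p q; rewrite !inE => /andP[pS pT] /andP[qS qT] pq.
rewrite clS //=; apply/allP => t tT; rewrite /commute_ps anticommMl.
by rewrite (negbTE (allP pT t tT)) (negbTE (allP qT t tT)).
Qed.

Lemma connect_anticomm (K M : {set pstr n}) u v :
  pmul_closed (K :|: M) -> connect (frustration K M) u v -> u != v ->
  exists2 x, x \in K :|: M & anticomm x u && anticomm x v.
Proof.
move=> clG /connectP[s]; pose reach y :=
  y = u \/ exists2 x, x \in K :|: M & anticomm x u && anticomm x y.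
suff reach_last y : path (frustration K M) y s -> reach y -> reach (last y s).
  move=> us -> uv; case: (reach_last u us (or_introl erefl)) => // ul.
  by rewrite ul eqxx in uv.
elim: s y => //= z s IH y /andP[/and3P[yG zG yz] zs] hy; apply: IH zs _; right.
case: hy => [yu|[x xG /andP[xu xy]]].
  rewrite yu in yG yz; exists (pmul z u); first by rewrite clG // anticommC.
  by rewrite !anticommMl !anticommxx (anticommC z u) yz.
case xz: (anticomm x z); first by exists x; rewrite ?xu.
case yu: (anticomm y u); first by exists y; rewrite ?yu.
exists (pmul x y); first exact: clG.
by rewrite !anticommMl xu yu xz yz.
Qed.

Lemma anticomm_flip S x u a : pmul_closed S -> x \in S -> u \in S ->
  anticomm x u -> anticomm a u ->
  exists2 y, y \in S &
    [/\ anticomm y a, anticomm y u & forall t, commute_ps u t -> anticomm y t = anticomm x t].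
Proof.
move=> clS xS uS xu au; case xa: (anticomm x a); first by exists x.
exists (pmul x u); first exact: clS.
split=> [||t /negbTE ut]; rewrite anticommMl ?xa ?(anticommC u a) ?au ?xu ?anticommxx //.
by rewrite ut addbF.
Qed.

Lemma pmul_closed_triple S x w a c : pmul_closed S ->
  [/\ x \in S, w \in S, a \in S & c \in S] ->
  [/\ anticomm x w, anticomm x a & anticomm x c] ->
  [/\ commute_ps w a, commute_ps w c & commute_ps a c] ->
  pmul w (pmul a c) \in S.
Proof.
move=> clS [xS wS aS cS] [xw xa xc] [/negbTE wa /negbTE wc /negbTE ac].
have xacS : pmul (pmul x a) c \in S by rewrite !clS // anticommMl xc ac.
rewrite -(pmulKK x) [pmul x (pmul a c)]pmulA; apply: (clS) => //; first exact: clS.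
by rewrite !(anticommMl, anticommMr) anticommxx xa xc (anticommC w x) xw wa wc.
Qed.

Lemma anticomm_both_step S u v w x a c : pmul_closed S ->
  [/\ u \in S, v \in S & w \in S] ->
  [/\ commute_ps u v, commute_ps u w & commute_ps v w] ->
  x \in S -> anticomm x u -> anticomm x v ->
  a \in commutant S [:: w] -> anticomm a u ->
  c \in commutant S [:: w] -> anticomm c v ->
  exists2 y, y \in commutant S [:: w] & anticomm y u && anticomm y v.
Proof.
move=> clS [uS vS wS] [cuv cuw cvw] xS xu xv aW au cW cv.
have clW := commutant_closed (T := [:: w]) clS.
case xw: (anticomm x w); last by exists x; rewrite ?xu // !inE xS /= /commute_ps xw.
move: (aW) (cW); rewrite !inE /= !andbT => /andP[aS /negbTE aw] /andP[cS /negbTE cw].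
case av: (anticomm a v); first by exists a; rewrite ?au.
case cu: (anticomm c u); first by exists c; rewrite ?cu.
case ac: (anticomm a c).
  by exists (pmul a c); [exact: clW | rewrite !anticommMl au av cu cv].
have [x1 x1S [x1a x1u x1_eq]] := anticomm_flip clS xS uS xu au.
have x1v : anticomm x1 v by rewrite x1_eq.
have [x2 x2S [x2c x2v x2_eq]] := anticomm_flip clS x1S vS x1v cv.
have cva : commute_ps v a by rewrite /commute_ps anticommC av.
have x2a : anticomm x2 a by rewrite x2_eq.
have x2w : anticomm x2 w by rewrite x2_eq // x1_eq.
move: cuv cuw cvw => /negbTE uv /negbTE uw /negbTE vw.
(* x2 anticommutes with w, a and c, which certifies that w a c lies in S. *)
exists (pmul w (pmul a c)).
  rewrite !inE (@pmul_closed_triple _ x2) //=; last first.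
    by rewrite /commute_ps (anticommC w a) aw (anticommC w c) cw ac.
  by rewrite /commute_ps !anticommMl anticommxx aw cw.
by rewrite !anticommMl (anticommC w u) (anticommC w v) uw vw au av cu cv.
Qed.

End ClosedSets.

Section CommutingFamily.
Variables (n : nat) (S B : {set pstr n}).
Hypotheses (S_closed : pmul_closed S) (BS : B \subset S)
  (B_commute : {in B &, forall p q, commute_ps p q}).

Lemma anticomm_both_commutant (T : seq (pstr n)) u v :
  {subset T <= B} -> u \in B -> v \in B ->
  (exists2 x, x \in S & anticomm x u && anticomm x v) ->
  (exists2 a, a \in commutant S T & anticomm a u) ->
  (exists2 c, c \in commutant S T & anticomm c v) ->
  exists2 y, y \in commutant S T & anticomm y u && anticomm y v.
Proof.
move=> + uB vB ex_x; elim: T => [|w T IH] TB [a aT au] [c cT cv].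
  by rewrite commutant_nil.
have wB : w \in B := TB w (mem_head w T).
have {}TB : {subset T <= B} by move=> t tT; apply: TB; rewrite inE tT orbT.
have BT p : p \in B -> p \in commutant S T.
  move=> pB; rewrite inE (subsetP BS) //=.
  by apply/allP => t tT; apply: B_commute => //; exact: TB.
move: aT cT; rewrite commutant_cons => aW cW.
have subT := subsetP (commutant_sub (commutant S T) [:: w]).
have [||x xT /andP[xu xv]] := IH TB; [by exists a; rewrite ?subT | by exists c; rewrite ?subT |].
apply: (anticomm_both_step (commutant_closed (T := T) S_closed) _ _ xT xu xv aW au cW cv).
  by split; apply: BT.
by split; apply: B_commute.
Qed.

End CommutingFamily.

Section CliffordConjugation.
Variable n : nat.
Implicit Types (S : {set pstr n}) (T : seq (pstr n)) (k p q t u v : pstr n).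

(* The action of the Clifford unitary exp(i pi/4 k) on Pauli strings, up to phase. *)
Definition pconj k p := if anticomm p k then pmul k p else p.

Lemma anticomm_pconj k p q : anticomm (pconj k p) (pconj k q) = anticomm p q.
Proof.
rewrite /pconj; case pk: (anticomm p k); case qk: (anticomm q k);
by rewrite ?(anticommMl, anticommMr) ?anticommxx ?(anticommC k p) ?(anticommC k q)
  ?pk ?qk /= ?negbK.
Qed.

Lemma pconjK k : involutive (pconj k).
Proof.
move=> p; rewrite /pconj; case pk: (anticomm p k); last by rewrite pk.
by rewrite anticommMl anticommxx pk pmulKl.
Qed.

Lemma pconj_closed S k p : pmul_closed S -> k \in S -> p \in S -> pconj k p \in S.
Proof. by move=> clS kS pS; rewrite /pconj; case: ifP => // pk; rewrite clS // anticommC. Qed.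

Lemma card_anticomm_commutant_le S T u v k : pmul_closed S ->
  k \in commutant S T -> pmul (pmul k u) v \in S ->
  anticomm k u -> anticomm k v -> commute_ps u v ->
  all (commute_ps u) T -> all (commute_ps v) T ->
  #|commutant S T :&: [set p | anticomm p u]| <= #|commutant S T :&: [set p | anticomm p v]|.
Proof.
move=> clS kT k'S ku kv /negbTE uv /allP uT /allP vT.
set k' := pmul (pmul k u) v in k'S; pose psi p := pconj k' (pconj k p).
have psi_inj : injective psi.
  by apply: (can_inj (g := fun p => pconj k (pconj k' p))) => p; rewrite /psi !pconjK.
have anticomm_psi p q : anticomm (psi p) (psi q) = anticomm p q by rewrite !anticomm_pconj.
have psi_u : psi u = v.
  rewrite /psi /pconj (anticommC u k) ku.
  have -> : anticomm (pmul k u) k'.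
    by rewrite !(anticommMl, anticommMr) !anticommxx (anticommC u k) ku kv uv.
  by rewrite pmulC pmulKl.
have psi_T t : t \in T -> psi t = t.
  move=> tT; have /negbTE kt : commute_ps k t by move: kT; rewrite inE => /andP[_ /allP]; apply.
  move: (uT t tT) (vT t tT) => /negbTE ut /negbTE vt.
  rewrite /psi /pconj (anticommC t k) kt !anticommMr.
  by rewrite (anticommC t k) (anticommC t u) (anticommC t v) kt ut vt.
have kS : k \in S by move: kT; rewrite inE => /andP[].
rewrite -(card_imset _ psi_inj); apply/subset_leq_card/subsetP => q /imsetP[p + ->].
rewrite !inE -andbA => /and3P[pS /allP pT pu].
rewrite !pconj_closed //= -psi_u anticomm_psi pu andbT.
by apply/allP => t tT; rewrite -(psi_T t tT) /commute_ps anticomm_psi; apply: pT.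
Qed.

End CliffordConjugation.

Section CartanClosure.
Variables (n : nat) (K M : {set pstr n}).
Hypothesis cartanKM : pauli_cartan K M.

Lemma pmul_closedK : pmul_closed K.
Proof. by case: cartanKM => _ []. Qed.

Lemma pmulMM_K p q : p \in M -> q \in M -> anticomm p q -> pmul p q \in K.
Proof. by case: cartanKM => _ [_ clMM _]; apply: clMM. Qed.

Lemma pmulKM_M p q : p \in K -> q \in M -> anticomm p q -> pmul p q \in M.
Proof. by case: cartanKM => _ [_ _ clKM]; apply: clKM. Qed.

Lemma pmul_closed_cartan : pmul_closed (K :|: M).
Proof.
move=> p q; rewrite !inE => /orP[pK|pM] /orP[qK|qM] pq.
- by rewrite pmul_closedK.
- by rewrite pmulKM_M ?orbT.
- by rewrite pmulC pmulKM_M ?orbT // anticommC.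
- by rewrite pmulMM_K.
Qed.

Lemma exists_commutant_K T y u : y \in commutant (K :|: M) T -> u \in M ->
  anticomm y u -> all (commute_ps u) T ->
  exists2 k, k \in commutant K T & forall t, commute_ps u t -> anticomm k t = anticomm y t.
Proof.
rewrite inE => /andP[]; rewrite inE => /orP[yK|yM] yT uM yu /allP uT.
  by exists y; rewrite // inE yK.
have yu_eq t : commute_ps u t -> anticomm (pmul y u) t = anticomm y t.
  by move=> /negbTE ut; rewrite anticommMl ut addbF.
exists (pmul y u) => //; rewrite inE pmulMM_K //=.
by apply/allP => t tT; rewrite /commute_ps yu_eq ?uT //; apply: (allP yT).
Qed.

End CartanClosure.

Section CartanLevels.
Variables (n d : nat) (K M : {set pstr n}) (b : 'I_d -> pstr n).
Hypotheses (cartanKM : pauli_cartan K M) (bM : forall i, b i \in M)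
  (b_commute : forall i j, commute_ps (b i) (b j))
  (b_connect : forall i j, connect (frustration K M) (b i) (b j)).

Let A i := [set p | anticomm p (b i)].
Let B := [set b i | i : 'I_d].

Lemma rest_commutant J : rest K A J = commutant K [seq b l | l <- enum J].
Proof.
apply/setP => p; rewrite in_setD inE andbC all_map; congr (_ && _).
apply/negP/allP => [no_l l | all_l /bigcupP[l lJ]].
  by rewrite mem_enum => lJ; apply/negP => pl; apply: no_l; apply/bigcupP; exists l; rewrite ?inE.
by rewrite inE; apply/negP; apply: all_l; rewrite mem_enum.
Qed.

Lemma B_sub : B \subset K :|: M.
Proof. by apply/subsetP => _ /imsetP[i _ ->]; rewrite inE bM orbT. Qed.

Lemma B_commute : {in B &, forall p q, commute_ps p q}.
Proof. by move=> _ _ /imsetP[i _ ->] /imsetP[j _ ->]. Qed.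

Lemma cartan_level_common J i j : 0 < level K A J i -> 0 < level K A J j ->
  exists2 x, x \in rest K A J :&: A i & x \in A j.
Proof.
rewrite !card_gt0 => /set0Pn[a aJi] /set0Pn[c cJj].
have [bij|bij] := eqVneq (b i) (b j).
  by exists a; rewrite // inE -bij; case/setIP: aJi => _; rewrite inE.
have [x xG xij] := connect_anticomm (pmul_closed_cartan cartanKM) (b_connect i j) bij.
set T := [seq b l | l <- enum J].
have bB l : b l \in B by apply: imset_f.
have TB : {subset T <= B} by move=> _ /mapP[l _ ->].
have restG p : p \in rest K A J -> p \in commutant (K :|: M) T.
  by rewrite rest_commutant !inE => /andP[-> ->].
have biT : all (commute_ps (b i)) T by apply/allP => _ /mapP[l _ ->].
have [||y yT /andP[yi yj]] := anticomm_both_commutant (pmul_closed_cartan cartanKM) B_sub B_commute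
  TB (bB i) (bB j) (ex_intro2 _ _ x xG xij).
- by case/setIP: aJi => aJ ai; exists a; rewrite ?restG //; move: ai; rewrite inE.
- by case/setIP: cJj => cJ cj; exists c; rewrite ?restG //; move: cj; rewrite inE.
have [k kT k_eq] := exists_commutant_K cartanKM yT (bM i) yi biT.
exists k; last by rewrite inE k_eq.
by rewrite rest_commutant inE kT inE k_eq.
Qed.

Lemma cartan_level_le J i j : 0 < level K A J i -> 0 < level K A J j ->
  level K A J i <= level K A J j.
Proof.
move=> i_pos j_pos; have [k /setIP[kJ ki] kj] := cartan_level_common i_pos j_pos.
move: kJ ki kj; rewrite /level !rest_commutant /A !inE => /andP[kK kT] ki kj.
have kbiM := pmulKM_M cartanKM kK (bM i) ki.
apply: (card_anticomm_commutant_le (k := k) (pmul_closedK cartanKM)) => //.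
- by rewrite inE kK.
- by apply: (pmulMM_K cartanKM) => //; rewrite anticommMl kj (negbTE (b_commute i j)).
- by apply/allP => _ /mapP[l _ ->].
- by apply/allP => _ /mapP[l _ ->].
Qed.

Lemma cartan_level_eq J i j : 0 < level K A J i -> 0 < level K A J j ->
  level K A J i = level K A J j.
Proof. by move=> i_pos j_pos; apply/eqP; rewrite eqn_leq !cartan_level_le. Qed.

Lemma level0_pos : injective b -> 1 < d -> forall i, 0 < level K A set0 i.
Proof.
move=> b_inj d_gt1 i.
have /set0Pn[j] : [set~ i] != set0 by rewrite -card_gt0 cardsC1 card_ord -subn1 subn_gt0.
rewrite in_setC1 => ji; have bij : b i != b j by rewrite (inj_eq b_inj) eq_sym.
have [x xG /andP[xi _]] := connect_anticomm (pmul_closed_cartan cartanKM) (b_connect i j) bij.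
have [|k kK k_eq] := exists_commutant_K cartanKM (T := [::]) _ (bM i) xi isT.
  by rewrite commutant_nil.
rewrite commutant_nil in kK; rewrite card_gt0; apply/set0Pn; exists k.
by rewrite rest0 inE kK inE k_eq.
Qed.

Lemma ksizes_levels (f : 'I_d -> 'I_d) :
  ksizes K (fun i => b (f i)) = levels K A set0 (map f (enum 'I_d)).
Proof.
apply: (@eq_from_nth _ 0); first by rewrite size_levels !size_map.
rewrite size_map size_enum_ord => r r_lt_d; pose i := Ordinal r_lt_d.
have enum_r : nth i (enum 'I_d) r = i := nth_ord_enum i i.
rewrite (nth_map i) ?enum_r; last by rewrite -cardE card_ord.
rewrite (nth_levels _ _ _ (f i)); last by rewrite size_map size_enum_ord.
rewrite (nth_map i) ?enum_r; last by rewrite size_enum_ord.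
rewrite /level rest_commutant.
apply: eq_card => k; rewrite /A !inE forall_lt_all -andbA [_ && anticomm _ _]andbC.
congr (_ && (_ && _)).
transitivity (all (fun l => commute_ps k (b l)) (take i (map f (enum 'I_d)))).
  by rewrite -map_take all_map.
by rewrite all_map; apply: eq_all_r => l; rewrite mem_enum !inE.
Qed.

Lemma exists_chain_ok_ksizes : injective b ->
  exists s : 'S_d, chain_ok (ksizes K (fun i => b (s i))).
Proof.
move=> b_inj.
have [L LE L_sorted] :=
  exists_sorted_levels cartan_level_common cartan_level_eq set0 (enum 'I_d).
have [s L_s] := perm_enum_ordP LE; exists s.
rewrite ksizes_levels -L_s; apply: sorted_chain_ok => //.
rewrite size_levels (perm_size LE) size_enum_ord => d_gt1.
case: L {L_sorted L_s} LE => [|i L] LE /=; last exact: level0_pos.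
by move: (perm_size LE); rewrite size_enum_ord => d0; rewrite -d0 in d_gt1.
Qed.

Lemma ksizes_perm_nz (s p : 'S_d) :
  [seq m <- ksizes K (fun i => b (s (p i))) | m != 0] =
  [seq m <- ksizes K (fun i => b (s i)) | m != 0].
Proof.
rewrite !ksizes_levels; apply: (levels_perm cartan_level_eq).
by rewrite (_ : map _ _ = map s (map p (enum 'I_d))) ?perm_map ?perm_map_enum // -map_comp.
Qed.

Lemma ksizes_perm_prefix (s p : 'S_d) r : r <= d ->
  (forall i : 'I_d, i < r -> 0 < #|kset K (fun j => b (s j)) i|) ->
  (forall i : 'I_d, r <= i -> p i = i) ->
  ksizes K (fun i => b (s (p i))) = ksizes K (fun i => b (s i)).
Proof.
move=> r_le_d s_pos fix_p; have [X XE pE] := map_perm_enum_prefix fix_p.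
set Y := take r (enum 'I_d); set Z := drop r (enum 'I_d).
have sYZ : map s (enum 'I_d) = map s Y ++ map s Z by rewrite -map_cat cat_take_drop.
have Y_nz : all (fun m => m != 0) (levels K A set0 (map s Y)).
  have := congr1 (take r) (ksizes_levels s); rewrite sYZ levels_cat take_size_cat; last first.
    by rewrite size_levels size_map size_takel // size_enum_ord.
  move=> <-; rewrite /ksizes -map_take all_map; apply/allP => i.
  by rewrite mem_take_enum => /s_pos; rewrite /= lt0n.
have spXZ : map (fun i => s (p i)) (enum 'I_d) = map s X ++ map s Z.
  by rewrite -map_cat -pE; exact: map_comp.
rewrite !ksizes_levels sYZ spXZ.
exact: (levels_perm_prefix cartan_level_eq _ (perm_map s XE) Y_nz).
Qed.

End CartanLevels.

Theorem theorem3 (n d : nat) (K M : {set pstr n}) (b : 'I_d -> pstr n) :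
  pauli_cartan K M ->
  injective b ->
  (forall i, b i \in M) ->
  (forall i j, commute_ps (b i) (b j)) ->
  (forall i j, connect (frustration K M) (b i) (b j)) ->
  exists s : 'S_d,
    [/\ chain_ok (ksizes K (fun i => b (s i))),
        (forall r : nat, 0 < r <= d ->
           (forall i : 'I_d, i < r -> 0 < #|kset K (fun j => b (s j)) i|) ->
           forall p : 'S_d, (forall i : 'I_d, r <= i -> p i = i) ->
             chain_ok (ksizes K (fun i => b (s (p i)))))
      & (forall p : 'S_d,
           [seq x <- ksizes K (fun i => b (s (p i))) | x != 0] =
           [seq x <- ksizes K (fun i => b (s i)) | x != 0])].
Proof.
move=> cartanKM b_inj bM b_commute b_connect.
have [s s_chain] := exists_chain_ok_ksizes cartanKM bM b_commute b_connect b_inj.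
exists s; split=> // [r /andP[_ r_le_d] s_pos p fix_p | p].
  by rewrite (ksizes_perm_prefix cartanKM bM b_commute b_connect r_le_d s_pos fix_p).
exact: ksizes_perm_nz cartanKM bM b_commute b_connect s p.
Qed.
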